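(* Let $P$ be an $n$-element poset with connected components $P_1,\ldots,P_r$, and let $n_i=|P_i|$. If for each $i$ the poset $P_i$ has at most $(n_i-1)!$ tangled labelings, then $P$ has at most $(n-r)(n-2)!$ tangled labelings.
   Context: A labeling of an $m$-element poset is a bijection to $[m]$; a linear extension is a labeling with $x<y\Rightarrow L(x)<L(y)$. Promotion $\partial$: for non-maximal $y$, the $L$-successor of $y$ is the element greater than $y$ with minimal label; the promotion chain is $v_1=L^{-1}(1)$, $v_{i+1}$ the $L$-successor of $v_i$, ending at the first maximal $v_p$; $\partial(L)(y)=L(y)-1$ off the chain, $\partial(L)(v_i)=L(v_{i+1})-1$ for $i<p$, $\partial(L)(v_p)=m$. The sorting time of $L$ is the least $k\ge0$ with $\partial^k(L)$ a linear extension; a labeling of an $m$-element poset is tangled if its sorting time is $m-1$. Connected components are those of the Hasse diagram. *)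

From mathcomp Require Import all_boot.
Set Implicit Arguments. Unset Strict Implicit. Unset Printing Implicit Defensive.

Section Poset.
Variables (T : finType) (le : rel T).

Definition is_poset : Prop :=
  [/\ reflexive le, antisymmetric le & transitive le].

Definition plt (x y : T) : bool := (x != y) && le x y.

(* Labelings take values in 'I_#|T|: label k (0-based) stands for k+1 in [m]. *)
Definition labeling := {ffun T -> 'I_#|T|}.

Definition is_linext (L : labeling) : bool :=
  [forall x, forall y, plt x y ==> (L x < L y)].

Definition Lsucc (L : labeling) (y : T) : option T :=
  [pick z | plt y z & [forall w, plt y w ==> (L z <= L w)]].

Fixpoint chain_from (L : labeling) (k : nat) (v : T) : seq T :=
  match k with
  | 0 => [::]
  | k'.+1 => v :: (if Lsucc L v is Some w then chain_from L k' w else [::])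
  end.

(* promotion chain v_1 = L^-1(1), v_2, ..., v_p (v_p the first maximal one) *)
Definition pchain (L : labeling) : seq T :=
  if [pick v | val (L v) == 0] is Some v then chain_from L #|T| v else [::].

Definition promote_val (L : labeling) (y : T) : nat :=
  let c := pchain L in
  if y \in c then
    let i := index y c in
    if i.+1 < size c then val (L (nth y c i.+1)) - 1 else #|T| - 1
  else val (L y) - 1.

Definition promote (L : labeling) : labeling :=
  [ffun y => insubd (L y) (promote_val L y)].

(* sorting time of L equals |P| - 1 *)
Definition tangled (L : labeling) : bool :=
  [&& injectiveb L,
      is_linext (iter #|T|.-1 promote L) &
      [forall k : 'I_#|T|.-1, ~~ is_linext (iter k promote L)]].

Definition ntangled : nat := #|[set L : labeling | tangled L]|.

Definition covers (x y : T) : bool :=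
  plt x y && [forall z, ~~ (plt x z && plt z y)].
Definition hasse : rel T := fun x y => covers x y || covers y x.
Definition components : {set {set T}} :=
  [set [set y | connect hasse x y] | x : T].

End Poset.

Definition restr (T : finType) (le : rel T) (C : {set T}) :
  rel {x : T | x \in C} := fun x y => le (val x) (val y).
Arguments restr {T} le C.

From Pilot Require Import Defs.
From mathcomp Require Import all_boot zify.
Set Implicit Arguments. Unset Strict Implicit. Unset Printing Implicit Defensive.

(* After k promotions every element carrying one of the k largest labels has a
   smaller label than all elements above it, so after n - 1 steps the labeling
   is a linear extension.
   On a component C, a promotion of L promotes the standardization of L on C when
   the label 1 lies in C and leaves that standardization unchanged otherwise.
   Hence the inversion that a tangled L still has after n - 2 promotions lies in
   some component C which has been promoted at most |C| - 2 times: both labels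
   n - 1 and n lie in C and the standardization of L on C is tangled.  Such an L
   is determined by that standardization and by its injective labels in [n - 2]
   off C, so each component contributes at most
   (|C| - 1)! (n - 2)! / (|C| - 2)! = (|C| - 1) (n - 2)!, and the sum of |C| - 1
   over the r components is n - r. *)

(* The bound of ['I_#|T|] may occur with [card] unlocked, which [lia] treats as an
   atom different from [#|T|]; [set] identifies the two up to conversion. *)
Ltac card_lia T := (try set m := #|T|); lia.

Section Promotion.
Variables (T : finType) (le : rel T).
Hypothesis Hpo : is_poset le.

Local Notation plt := (plt le).
Local Notation n := #|T|.

Lemma plt_irr : irreflexive plt.
Proof. by move=> x; rewrite /Defs.plt eqxx. Qed.

Lemma plt_trans : transitive plt.
Proof.
case: Hpo => _ anti tr y x z /andP[nxy lxy] /andP[nyz lyz].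
rewrite /Defs.plt (tr _ _ _ lxy lyz) andbT.
by apply: contra_neq nxy => exz; subst z; apply: anti; rewrite lxy lyz.
Qed.

Lemma labeling_onto (L : labeling T) : injective L -> forall i : 'I_n, exists y, L y = i.
Proof.
move=> inj i; have hc : #|'I_n| <= #|T| by rewrite card_ord.
by have /codomP[y ->] := inj_card_onto inj hc i; exists y.
Qed.

Lemma labeling_zero (L : labeling T) : injective L -> 0 < n -> exists v1, L v1 = 0 :> nat.
Proof.
by move=> inj n_gt0; have [y Hy] := labeling_onto inj (Ordinal n_gt0); exists y; rewrite Hy.
Qed.

Lemma LsuccP (L : labeling T) y z : Lsucc le L y = Some z ->
  plt y z /\ forall w, plt y w -> L z <= L w.
Proof.
rewrite /Lsucc; case: pickP => // z' /andP[p /forallP H] [<-]; split => // w pw.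
exact: (implyP (H w)).
Qed.

Lemma Lsucc_None (L : labeling T) y : Lsucc le L y = None -> forall w, ~~ plt y w.
Proof.
rewrite /Lsucc; case: pickP => // H _ w; apply/negP => pw.
case: (arg_minnP (fun z => (L z : nat)) pw) => z pz zmin.
have /negbT/negP := H z; rewrite pz; apply; apply/forallP => w'.
by apply/implyP; apply: zmin.
Qed.

Lemma Lsucc_Some (L : labeling T) y z : injective L -> plt y z ->
  (forall w, plt y w -> L z <= L w) -> Lsucc le L y = Some z.
Proof.
move=> inj pz zm; case E: (Lsucc le L y) => [z'|].
  have [pz' zm'] := LsuccP E; congr Some; apply: inj; apply/val_inj/eqP.
  by rewrite eqn_leq zm' ?zm.
by move: (Lsucc_None E z); rewrite pz.
Qed.

Definition succ_rel (L : labeling T) : rel T := fun a b => Lsucc le L a == Some b.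

Lemma succ_rel_plt L : subrel (succ_rel L) plt.
Proof. by move=> a b /eqP/LsuccP[]. Qed.

Lemma chain_from_path L k v : path (succ_rel L) v (behead (chain_from le L k v)).
Proof.
elim: k v => [|k IH] v //=; case E: (Lsucc le L v) => [w|] //.
by case: k IH => [|k] IH //=; rewrite /succ_rel E eqxx /=; apply: IH.
Qed.

Lemma chain_from_uniq L k v : uniq (chain_from le L k v).
Proof.
case: k => [|k] //; apply: (sorted_uniq plt_trans plt_irr).
by rewrite /= (sub_path (@succ_rel_plt L) (chain_from_path L k.+1 v)).
Qed.

Lemma size_chain_from L k v : size (chain_from le L k v) <= n.
Proof. by rewrite -(card_uniqP (chain_from_uniq L k v)) max_card. Qed.

Lemma chain_from_stable L k v : size (chain_from le L k.+1 v) <= k ->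
  chain_from le L k.+1 v = chain_from le L k v.
Proof.
elim: k v => [|k IH] v //=; case E: (Lsucc le L v) => [w|] //=.
by move=> H; rewrite -IH.
Qed.

Lemma chain_from_fuel L k v : n <= k -> chain_from le L k v = chain_from le L n v.
Proof.
elim: k => [|k IH] lnk; first by have -> : n = 0 by lia.
case: (ltnP n k.+1) => h; last by have -> : n = k.+1 by lia.
by rewrite chain_from_stable ?IH ?(leq_trans (size_chain_from L k.+1 v)).
Qed.

Lemma chain_from_end L k v :
  Lsucc le L (last v (behead (chain_from le L k.+1 v))) = None \/
  size (chain_from le L k.+1 v) = k.+1.
Proof.
elim: k v => [|k IH] v /=; first by case: (Lsucc le L v); right.
case E: (Lsucc le L v) => [w|] /=; last by left.
by case: (IH w) => /= H; [left | right; rewrite H].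
Qed.

Definition promote_target (L : labeling T) (y : T) : option T :=
  if y \in pchain le L then Lsucc le L y else Some y.

Section Chain.
Variables (L : labeling T) (v1 : T).
Hypotheses (inj : injective L) (L_v1 : L v1 = 0 :> nat).

Lemma pchainE : exists s, [/\ pchain le L = v1 :: s, path (succ_rel L) v1 s &
  Lsucc le L (last v1 s) = None].
Proof.
have n_gt0 : 0 < n by apply/card_gt0P; exists v1.
rewrite /pchain; case: pickP => [v /eqP Hv|H]; last by move: (H v1); rewrite /= L_v1 eqxx.
have -> : v = v1 by apply: inj; apply: val_inj; rewrite /= Hv L_v1.
have -> : chain_from le L n v1 = chain_from le L n.-1.+1 v1 by rewrite prednK.
exists (behead (chain_from le L n.-1.+1 v1)).
split=> //; first exact: chain_from_path.
have E : chain_from le L n.-1.+2 v1 = chain_from le L n.-1.+1 v1.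
  by rewrite !(chain_from_fuel L v1) // prednK.
case: (chain_from_end L n.-1.+1 v1); first by rewrite E.
by move=> H; have := size_chain_from L n.-1.+2 v1; rewrite H; lia.
Qed.

Lemma pchain_v1 : v1 \in pchain le L.
Proof. by have [s [-> _ _]] := pchainE; rewrite mem_head. Qed.

Lemma pchain_min y : y \in pchain le L -> y = v1 \/ plt v1 y.
Proof.
have [s [-> p _]] := pchainE; rewrite inE => /orP[/eqP -> | ys]; first by left.
right; have /allP := order_path_min plt_trans (sub_path (@succ_rel_plt L) p).
exact.
Qed.

Lemma Lsucc_pchainE y : y \in pchain le L ->
  Lsucc le L y = if (index y (pchain le L)).+1 < size (pchain le L)
                 then Some (nth y (pchain le L) (index y (pchain le L)).+1) else None.
Proof.
have [s [-> p hl]] := pchainE => yc.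
have ilt : index y (v1 :: s) < size (v1 :: s) by rewrite index_mem.
have iy : nth y (v1 :: s) (index y (v1 :: s)) = y by rewrite nth_index.
case: ltnP => h.
  by have /eqP := (pathP y p) _ h; rewrite iy.
have ei : index y (v1 :: s) = size s by move: h ilt; rewrite [size _]/=; lia.
by rewrite -iy ei nth_last.
Qed.

Lemma promote_valE y : promote_val le L y =
  if promote_target L y is Some z then L z - 1 else n - 1.
Proof.
rewrite /promote_val /promote_target; case: ifP => // yc.
by rewrite (Lsucc_pchainE yc); case: ifP.
Qed.

Lemma promoteE y : promote le L y = promote_val le L y :> nat.
Proof.
rewrite /promote ffunE val_insubd promote_valE.
case: promote_target => [z|]; last by rewrite ifT // subn1 prednK //; apply/card_gt0P; exists v1.
by rewrite ifT // (leq_ltn_trans (leq_subr 1 _) (ltn_ord (L z))).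
Qed.

Lemma pchain_succ y z : y \in pchain le L -> Lsucc le L y = Some z -> z \in pchain le L.
Proof.
by move=> yc; rewrite (Lsucc_pchainE yc); case: ifP => // h [<-]; rewrite mem_nth.
Qed.

Lemma pchain_pred z : z \in pchain le L -> z != v1 ->
  exists2 y, y \in pchain le L & Lsucc le L y = Some z.
Proof.
have [s [-> p _]] := pchainE; rewrite inE => /orP[-> // | zs] _.
have jlt : index z s < size s by rewrite index_mem.
exists (nth z (v1 :: s) (index z s)); first by rewrite mem_nth //= ltnS ltnW.
by have /eqP := (pathP z p) _ jlt; rewrite nth_index.
Qed.

Lemma pchain_last : exists2 y, y \in pchain le L & Lsucc le L y = None.
Proof. by have [s [-> _ hl]] := pchainE; exists (last v1 s); rewrite ?mem_last. Qed.

Lemma labeling_pos y : y != v1 -> 0 < L y.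
Proof.
by rewrite lt0n; apply: contra_neq => Ly0; apply: inj; apply: val_inj; rewrite /= Ly0 L_v1.
Qed.

Lemma promote_target_None y : promote_target L y = None -> Lsucc le L y = None.
Proof. by rewrite /promote_target; case: ifP. Qed.

Lemma promote_target_pos y z : promote_target L y = Some z -> 0 < L z.
Proof.
rewrite /promote_target; case: ifP => [yc /LsuccP[pyz _] | yc [<-]]; apply: labeling_pos.
  have pvz : plt v1 z by case: (pchain_min yc) => [<- // | /plt_trans]; apply.
  by apply: contraTneq pvz => ->; rewrite plt_irr.
by apply: contraFneq yc => ->; apply: pchain_v1.
Qed.

Lemma promote_target_onto w : w != v1 -> exists y, promote_target L y = Some w.
Proof.
rewrite /promote_target => wv; case wc: (w \in pchain le L); last by exists w; rewrite wc.
by have [y yc Ey] := pchain_pred wc wv; exists y; rewrite yc.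
Qed.

Lemma promote_onto (i : 'I_n) : exists y, promote le L y = i.
Proof.
case: (ltnP i n.-1) => hi.
  have i1_lt : i.+1 < n by lia.
  have [w Lw] := labeling_onto inj (Ordinal i1_lt).
  have wv : w != v1 by apply: contraTneq isT => ew; move: L_v1; rewrite -ew Lw.
  have [y Ty] := promote_target_onto wv.
  by exists y; apply: val_inj; rewrite /= promoteE promote_valE Ty Lw /= subn1.
have [y yc Ey] := pchain_last.
exists y; apply: val_inj; rewrite /= promoteE promote_valE /promote_target yc Ey.
by move: hi (ltn_ord i); card_lia T.
Qed.

Lemma promote_inj : injective (promote le L).
Proof.
suff H : {in T &, injective (promote le L)} by move=> x y; apply: H.
apply/image_injP; rewrite eqn_leq leq_image_card /= -[X in X <= _]card_ord.
apply/subset_leq_card/subsetP => i _.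
by have [y <-] := promote_onto i; apply: image_f.
Qed.

Lemma promote_ltE x y : (promote le L x < promote le L y) =
  match promote_target L x, promote_target L y with
  | Some zx, Some zy => L zx < L zy
  | Some _, None => true
  | None, _ => false
  end.
Proof.
rewrite !promoteE !promote_valE.
case Tx: (promote_target L x) => [zx|]; last first.
  by case: promote_target => [zy|]; rewrite ?ltnn // ltnNge leq_sub2r // ltnW.
have := promote_target_pos Tx; have := ltn_ord (L zx).
case Ty: (promote_target L y) => [zy|]; last by card_lia T.
have := promote_target_pos Ty; have := ltn_ord (L zy); card_lia T.
Qed.

(* Labels are 0-based: [n - k <= M x] says that [x] carries one of the [k] largest labels. *)
Definition top_sorted (M : labeling T) k :=
  forall x y, plt x y -> n - k <= M x -> M x < M y.

Lemma promote_target_lt k x y zx zy : top_sorted L k -> plt x y ->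
  promote_target L x = Some zx -> promote_target L y = Some zy ->
  n - k <= L zx -> L zx < L zy.
Proof.
move=> srt pxy; rewrite /promote_target.
case: ifP => xc; case: ifP => yc.
- move=> Ex Ey hx; have [_ zx_min] := LsuccP Ex; have [pyz _] := LsuccP Ey.
  exact: leq_ltn_trans (zx_min y pxy) (srt _ _ pyz (leq_trans hx (zx_min y pxy))).
- move=> Ex [<-] _; have [_ zx_min] := LsuccP Ex; rewrite ltn_neqAle zx_min // andbT.
  apply: contraFneq yc => /val_inj/inj <-; exact: pchain_succ Ex.
- move=> [<-] Ey hx; have [pyz _] := LsuccP Ey; have Lxy := srt _ _ pxy hx.
  exact: ltn_trans Lxy (srt _ _ pyz (leq_trans hx (ltnW Lxy))).
- by move=> [<-] [<-]; apply: srt.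
Qed.

Lemma promote_top_sorted k : top_sorted L k -> top_sorted (promote le L) k.+1.
Proof.
move=> srt x y pxy; rewrite !promoteE !promote_valE.
case Tx: (promote_target L x) => [zx|]; last first.
  by have := Lsucc_None (promote_target_None Tx) y; rewrite pxy.
have := promote_target_pos Tx; have := ltn_ord (L zx).
case Ty: (promote_target L y) => [zy|]; last by lia.
have := promote_target_pos Ty => zy_pos Lzx zx_pos hx.
have := promote_target_lt srt pxy Tx Ty; lia.
Qed.

End Chain.

Lemma promote_iter_inj (L : labeling T) k : injective L -> injective (iter k (promote le) L).
Proof.
move=> inj; elim: k => //= k IH.
case: (posnP n) => [n0 | n_gt0]; first by move=> x; have := ltn_ord (L x); card_lia T.
by have [v Hv] := labeling_zero IH n_gt0; apply: promote_inj IH Hv.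
Qed.

Lemma top_sorted_iter (L : labeling T) k : injective L -> top_sorted (iter k (promote le) L) k.
Proof.
move=> inj; elim: k => [|k IH]; first by move=> x y _ /=; have := ltn_ord (L x); card_lia T.
have inj_k := promote_iter_inj (k := k) inj.
case: (posnP n) => [n0 | n_gt0]; first by move=> x; have := ltn_ord (L x); card_lia T.
by have [v Hv] := labeling_zero inj_k n_gt0; exact (promote_top_sorted inj_k Hv IH).
Qed.

Lemma linextP (M : labeling T) :
  reflect (forall x y, plt x y -> M x < M y) (is_linext le M).
Proof.
apply: (iffP forallP) => H x; first by move=> y /(implyP (forallP (H x) y)).
by apply/forallP => y; apply/implyP; apply: H.
Qed.

Lemma linext_top_sorted (M : labeling T) k : injective M -> n.-1 <= k ->
  top_sorted M k -> is_linext le M.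
Proof.
move=> inj hk srt; apply/linextP => x y pxy.
case: (posnP (M x)) => [Mx0 | Mx_pos]; last by apply: srt => //; move: hk Mx_pos; card_lia T.
rewrite Mx0 lt0n; apply: contraTneq pxy => My0.
have -> : x = y by apply: inj; apply: val_inj; rewrite /= Mx0 My0.
by rewrite plt_irr.
Qed.

Lemma linext_iter_sort (L : labeling T) : injective L -> is_linext le (iter n.-1 (promote le) L).
Proof.
move=> inj.
exact (linext_top_sorted (promote_iter_inj inj) (leqnn _) (@top_sorted_iter L _ inj)).
Qed.

Lemma linext_promote (L : labeling T) :
  injective L -> is_linext le L -> is_linext le (promote le L).
Proof.
move=> inj /linextP L_sorted.
case: (posnP n) => [n0 | n_gt0]; first by apply/linextP => x; have := ltn_ord (L x); card_lia T.
have [v Hv] := labeling_zero inj n_gt0.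
apply: (linext_top_sorted (promote_inj inj Hv) (leqnSn n.-1)).
by apply: (promote_top_sorted inj Hv) => x y pxy _; apply: L_sorted.
Qed.

Lemma linext_iter_mono (L : labeling T) k j : injective L -> k <= j ->
  is_linext le (iter k (promote le) L) -> is_linext le (iter j (promote le) L).
Proof.
move=> inj /subnK <-; elim: (j - k) => // i IH /IH.
by rewrite addSn iterS; apply: linext_promote; apply: promote_iter_inj.
Qed.

Definition plt_closed (C : {set T}) := forall a b, plt a b -> (a \in C) = (b \in C).

Lemma promote_label_source (C : {set T}) (L : labeling T) x : injective L -> plt_closed C ->
  exists y, (x \in C) = (y \in C) /\ L y = (promote le L x).+1 %% n :> nat.
Proof.
move=> inj closedC; have n_gt0 : 0 < n by apply/card_gt0P; exists x.
have [v1 L_v1] := labeling_zero inj n_gt0.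
rewrite (promoteE inj L_v1) (promote_valE inj L_v1).
case Tx: (promote_target L x) => [z|].
  exists z; split.
    move: Tx; rewrite /promote_target; case: ifP => [_ /LsuccP[pxz _] | _ [->]] //.
    exact: closedC.
  have Lz_pos := promote_target_pos inj L_v1 Tx; have Lz_lt := ltn_ord (L z).
  by rewrite modn_small; move: Lz_pos Lz_lt; card_lia T.
have xc : x \in pchain le L by move: Tx; rewrite /promote_target; case: ifP.
exists v1; split; first by case: (pchain_min inj L_v1 xc) => [-> | /closedC].
by rewrite L_v1 subn1 prednK // modnn.
Qed.

Lemma iter_promote_label_source (C : {set T}) (L : labeling T) t x :
  injective L -> plt_closed C ->
  exists y, (x \in C) = (y \in C) /\ L y = (iter t (promote le) L x + t) %% n :> nat.
Proof.
move=> inj closedC; elim: t x => [|t IH] x.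
  by exists x; rewrite addn0 modn_small.
have [y1 [C_y1 L_y1]] := promote_label_source x (promote_iter_inj (k := t) inj) closedC.
have [y [C_y L_y]] := IH y1.
by exists y; rewrite C_y1 C_y L_y L_y1 modnDml addSnnS.
Qed.

End Promotion.

Lemma card_ord_lt m k : k <= m -> #|[set i : 'I_m | i < k]| = k.
Proof.
move=> le_km; have widen_inj : injective (widen_ord le_km).
  by move=> i j /(congr1 val) /= /val_inj.
rewrite -[RHS]card_ord -(card_imset _ widen_inj).
apply: eq_card => i; rewrite inE; apply/idP/imsetP => [i_lt | [j _ ->]]; last exact: (ltn_ord j).
by exists (Ordinal i_lt); last by apply: val_inj.
Qed.

Lemma card_labels_lt (U : finType) (L : labeling U) x : injective L ->
  #|[set y | L y < L x]| = L x.
Proof.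
move=> inj; rewrite -(card_imset _ inj) -[RHS](@card_ord_lt #|U| (L x)); last first.
  exact: ltnW (ltn_ord (L x)).
apply: eq_card => i; rewrite inE; apply/imsetP/idP => [[y] | i_lt]; first by rewrite inE => ? ->.
by have [y Ly] := labeling_onto inj i; exists y; rewrite ?inE Ly.
Qed.

Section Restriction.
Variables (T : finType) (le : rel T) (C : {set T}).
Hypothesis Hpo : is_poset le.

Local Notation S := {x : T | x \in C}.
Local Notation leS := (restr le C).
Local Notation n := #|T|.

Lemma restr_poset : is_poset leS.
Proof.
case: Hpo => refl anti trans; split; first by move=> x; apply: refl.
  by move=> x y /anti/val_inj.
by move=> x y z; apply: trans.
Qed.

Lemma plt_restr (a b : S) : plt leS a b = plt le (val a) (val b).
Proof. by rewrite /Defs.plt /restr (inj_eq val_inj). Qed.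

Definition rank (L : labeling T) (x : S) := #|[set y : S | L (val y) < L (val x)]|.

Lemma rank_lt (L : labeling T) x : rank L x < #|{: S}|.
Proof.
rewrite -cardsT; apply: proper_card; rewrite properT; apply/eqP => all_lt.
by have := in_setT x; rewrite -all_lt inE ltnn.
Qed.

Definition std (L : labeling T) : labeling S := [ffun x => Ordinal (rank_lt L x)].

Lemma stdE (L : labeling T) x : std L x = rank L x :> nat.
Proof. by rewrite ffunE. Qed.

Lemma std_lt (L : labeling T) (x y : S) : injective L ->
  (std L x < std L y) = (L (val x) < L (val y)).
Proof.
move=> inj; rewrite !stdE /rank.
case: (ltngtP (L (val x)) (L (val y))) => h.
- apply: proper_card; apply/properP; split; last by exists x; rewrite !inE ?ltnn.
  by apply/subsetP => z; rewrite !inE => /ltn_trans; apply.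
- rewrite ltnNge subset_leq_card //; apply/subsetP => z.
  by rewrite !inE => /ltn_trans; apply.
- have -> : x = y by apply/val_inj/inj/val_inj.
  by rewrite ltnn.
Qed.

Lemma std_inj (L : labeling T) : injective L -> injective (std L).
Proof.
move=> inj x y e; apply: contraTeq isT => nxy.
have : L (val x) != L (val y) by rewrite (inj_eq inj) (inj_eq val_inj).
by rewrite neq_ltn -!std_lt // e ltnn.
Qed.

Hypothesis closedC : plt_closed le C.

Lemma Lsucc_std (L : labeling T) (x : S) : injective L ->
  Lsucc le L (val x) = omap val (Lsucc leS (std L) x).
Proof.
move=> inj; case E: (Lsucc leS (std L) x) => [z|] /=.
  have [pz z_min] := LsuccP E; rewrite plt_restr in pz.
  apply: Lsucc_Some => // w pw.
  have wC : w \in C by rewrite -(closedC pw) (valP x).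
  have := z_min (exist _ w wC); rewrite plt_restr => /(_ pw).
  by rewrite leqNgt std_lt // -leqNgt.
case E': (Lsucc le L (val x)) => [z|] //.
have [pz _] := LsuccP E'.
have zC : z \in C by rewrite -(closedC pz) (valP x).
by move: (Lsucc_None E (exist _ z zC)); rewrite plt_restr pz.
Qed.

Lemma chain_from_std (L : labeling T) k (x : S) : injective L ->
  map val (chain_from leS (std L) k x) = chain_from le L k (val x).
Proof.
move=> inj; elim: k x => [|k IH] x //=.
by rewrite (Lsucc_std x inj); case: (Lsucc leS (std L) x) => [z|] //=; rewrite IH.
Qed.

Section Standardization.
Variables (L : labeling T) (v1 : T).
Hypotheses (inj : injective L) (L_v1 : L v1 = 0 :> nat).

Lemma pchain_std_out (u : S) : v1 \notin C -> val u \notin pchain le L.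
Proof.
move=> v1C; apply: contra v1C => uc.
by case: (pchain_min Hpo inj L_v1 uc) => [<- | /closedC ->]; apply: valP.
Qed.

Lemma promote_lt_std_out (u w : S) : v1 \notin C ->
  (promote le L (val u) < promote le L (val w)) = (L (val u) < L (val w)).
Proof.
move=> v1C; rewrite (promote_ltE Hpo inj L_v1) /promote_target.
by rewrite !(negbTE (pchain_std_out _ v1C)).
Qed.

Section InC.
Hypothesis v1C : v1 \in C.

Let v1' : S := exist _ v1 v1C.

Lemma std_v1 : std L v1' = 0 :> nat.
Proof.
by rewrite stdE /rank; apply/eqP; rewrite cards_eq0; apply/eqP/setP => y; rewrite !inE L_v1.
Qed.

Lemma pchain_std : map val (pchain leS (std L)) = pchain le L.
Proof.
rewrite /pchain; case: pickP => [v /eqP std_v | H]; last by move: (H v1'); rewrite /= std_v1 eqxx.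
have -> : v = v1' by apply: (std_inj inj); apply: val_inj; rewrite /= std_v std_v1.
case: pickP => [w /eqP Lw | H]; last by move: (H v1); rewrite /= L_v1 eqxx.
have -> : w = v1 by apply: inj; apply: val_inj; rewrite /= Lw L_v1.
rewrite -(chain_from_fuel restr_poset (std L) v1' (_ : #|{: S}| <= n)).
  exact: chain_from_std.
by rewrite card_sig max_card.
Qed.

Lemma promote_target_std (u : S) :
  promote_target le L (val u) = omap val (promote_target leS (std L) u).
Proof.
rewrite /promote_target -pchain_std (mem_map val_inj).
by case: ifP => _ //; apply: Lsucc_std.
Qed.

Lemma std_promote_in : std (promote le L) = promote leS (std L).
Proof.
have std_inj := std_inj inj.
apply/ffunP => x; apply: ord_inj; rewrite stdE /rank.
rewrite -(card_labels_lt x (promote_inj restr_poset std_inj std_v1)).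
apply: eq_card => y; rewrite !inE (promote_ltE Hpo inj L_v1).
rewrite (promote_ltE restr_poset std_inj std_v1) !promote_target_std.
by case: promote_target => [a|]; case: promote_target => [b|] //=; rewrite std_lt.
Qed.

End InC.

Lemma std_promote_out : v1 \notin C -> std (promote le L) = std L.
Proof.
move=> v1C; apply/ffunP => x; apply: ord_inj; rewrite !stdE /rank.
by apply: eq_card => y; rewrite !inE promote_lt_std_out.
Qed.

End Standardization.

End Restriction.

Section Components.
Variables (T : finType) (le : rel T).
Hypothesis Hpo : is_poset le.

Local Notation n := #|T|.

Definition count_below (C : {set T}) (L : labeling T) t := #|[set y in C | L y < t]|.

Lemma count_below0 C L : count_below C L 0 = 0.
Proof. by apply/eqP; rewrite cards_eq0; apply/eqP/setP => y; rewrite !inE ltn0 andbF. Qed.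

Lemma count_below_step C (L : labeling T) t y : injective L -> L y = t :> nat ->
  count_below C L t.+1 = count_below C L t + (y \in C).
Proof.
move=> inj Ly; have L_eq z : (L z == t :> nat) = (z == y).
  by rewrite -Ly (inj_eq val_inj) (inj_eq inj).
rewrite /count_below; case yC: (y \in C).
  have -> : [set z in C | L z < t.+1] = y |: [set z in C | L z < t].
    apply/setP => z; rewrite !inE ltnS leq_eqVlt L_eq.
    by case: (eqVneq z y) => [-> | _]; rewrite ?yC.
  by rewrite cardsU1 !inE Ly ltnn andbF addn1.
rewrite addn0; apply: eq_card => z; rewrite !inE ltnS leq_eqVlt L_eq.
by case: (eqVneq z y) => [-> | _]; rewrite ?yC.
Qed.

(* Between times [t] and [t + 1] the promotion acts on [C] exactly when the
   element labelled 1 at time [t] lies in [C], i.e. when the element originally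
   labelled [t + 1] does. *)
Lemma std_iter (C : {set T}) (L : labeling T) t : plt_closed le C -> injective L -> t <= n ->
  std C (iter t (promote le) L) = iter (count_below C L t) (promote (restr le C)) (std C L).
Proof.
move=> closedC inj; elim: t => [|t IH] t_le; first by rewrite count_below0.
have inj_t := promote_iter_inj Hpo (k := t) inj.
have [v1 L_v1] := labeling_zero inj_t (leq_ltn_trans (leq0n t) t_le).
have [y [Cy Ly]] := iter_promote_label_source Hpo t v1 inj closedC.
rewrite L_v1 add0n modn_small // in Ly.
rewrite (count_below_step C inj Ly) iterS.
case: (boolP (v1 \in C)) => v1C.
  by rewrite (std_promote_in Hpo closedC inj_t L_v1 v1C) (IH (ltnW t_le)) -Cy v1C addn1.
by rewrite (std_promote_out Hpo closedC inj_t L_v1 v1C) (IH (ltnW t_le)) -Cy (negbTE v1C) addn0.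
Qed.

Lemma hasse_sym : symmetric (hasse le).
Proof. by move=> x y; rewrite /hasse orbC. Qed.

Lemma connect_plt x y : plt le x y -> connect (hasse le) x y.
Proof.
have [k] := ubnP #|[set z | plt le x z && plt le z y]|.
elim: k x y => // k IH x y Hk pxy.
case: (boolP [forall z, ~~ (plt le x z && plt le z y)]) => [covers_xy | ].
  by apply: connect1; rewrite /hasse /covers pxy covers_xy.
case/forallPn => z /negPn /andP[pxz pzy].
have sub_xz : [set w | plt le x w && plt le w z] \proper [set w | plt le x w && plt le w y].
  apply/properP; split; last by exists z; rewrite !inE ?pxz ?pzy // plt_irr andbF.
  by apply/subsetP => w; rewrite !inE => /andP[-> /plt_trans->].
have sub_zy : [set w | plt le z w && plt le w y] \proper [set w | plt le x w && plt le w y].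
  apply/properP; split; last by exists z; rewrite !inE ?pxz ?pzy // plt_irr.
  by apply/subsetP => w; rewrite !inE => /andP[/(plt_trans Hpo pxz)-> ->].
apply: (@connect_trans _ _ z).
  exact: IH (leq_trans (proper_card sub_xz) Hk) pxz.
exact: IH (leq_trans (proper_card sub_zy) Hk) pzy.
Qed.

Lemma components_plt_closed C : C \in components le -> plt_closed le C.
Proof.
case/imsetP => x0 _ -> a b /connect_plt cab; rewrite !inE.
have cba : connect (hasse le) b a by rewrite (sym_connect_sym hasse_sym).
by apply/idP/idP => /connect_trans; apply.
Qed.

Lemma components_partition : partition (components le) [set: T].
Proof.
have eqR : {in [set: T] & &, equivalence_rel (connect (hasse le))}.
  move=> x y z _ _ _; split=> [|cxy]; first exact: connect0.
  by apply/idP/idP => /(connect_trans _); apply; rewrite // (sym_connect_sym hasse_sym).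
have -> : components le = equivalence_partition (connect (hasse le)) [set: T].
  apply/setP => A; apply/imsetP/imsetP => -[x _ ->];
    by exists x => //; apply/setP => y; rewrite !inE.
exact: equivalence_partitionP.
Qed.

Lemma components_card_sum : \sum_(C in components le) #|C| = n.
Proof. by rewrite -(card_partition components_partition) cardsT. Qed.

Lemma components_card_gt0 C : C \in components le -> 0 < #|C|.
Proof. by case/imsetP => x _ ->; apply/card_gt0P; exists x; rewrite inE connect0. Qed.

End Components.

Section TangledComponent.
Variables (T : finType) (le : rel T).
Hypothesis Hpo : is_poset le.

Local Notation n := #|T|.

Definition tangled_at (C : {set T}) := [set L : labeling T | [&& tangled le L,
  [forall y, (n.-2 <= L y) ==> (y \in C)] & tangled (restr le C) (std C L)]].

Lemma tangled_inversion (L : labeling T) : 2 <= n -> tangled le L ->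
  exists x y, plt le x y /\ ~~ (iter n.-2 (promote le) L x < iter n.-2 (promote le) L y).
Proof.
move=> n_ge2 /and3P[_ _ /forallP not_sorted].
have k_lt : n.-2 < n.-1 by card_lia T.
have /forallPn[x /forallPn[y]] := not_sorted (Ordinal k_lt).
by rewrite negb_imply => /andP[pxy inv]; exists x, y.
Qed.

Lemma std_not_linext (C : {set T}) (M : labeling T) x y : x \in C -> y \in C ->
  injective M -> plt le x y -> ~~ (M x < M y) -> ~~ is_linext (restr le C) (std C M).
Proof.
move=> xC yC inj pxy; apply: contra => /linextP/(_ (exist _ x xC) (exist _ y yC)).
by rewrite plt_restr std_lt //; apply.
Qed.

Lemma count_below_not_linext (C : {set T}) (L : labeling T) t :
  plt_closed le C -> injective L -> t <= n ->
  ~~ is_linext (restr le C) (std C (iter t (promote le) L)) -> count_below C L t < #|C|.-1.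
Proof.
move=> closedC inj t_le; rewrite std_iter //; apply: contraR; rewrite -leqNgt => le_count.
have [rp restr_inj] := (restr_poset C Hpo, std_inj (C := C) inj).
apply: (linext_iter_mono rp restr_inj _ (linext_iter_sort rp restr_inj)).
by rewrite card_sig.
Qed.

(* [C] carries [#|C|] labels in all, so fewer than [#|C| - 1] of them lie below
   [n - 2] only if [C] carries both top labels. *)
Lemma top_labels_in (C : {set T}) (L : labeling T) : injective L -> 2 <= n ->
  count_below C L n.-2 < #|C|.-1 ->
  (forall y, n.-2 <= L y -> y \in C) /\ count_below C L n.-2 = #|C|.-2.
Proof.
move=> inj n_ge2 count_lt.
have [lt2 lt1] : n.-2 < n /\ n.-1 < n by split; card_lia T.
have [y2 L_y2] := labeling_onto inj (Ordinal lt2).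
have [y1 L_y1] := labeling_onto inj (Ordinal lt1).
have count_n : count_below C L n = #|C|.
  by apply: eq_card => z; rewrite !inE ltn_ord andbT.
have count_n1 : count_below C L n.-1 = count_below C L n.-2 + (y2 \in C).
  rewrite -(count_below_step C inj (_ : L y2 = n.-2 :> nat)) ?L_y2 //.
  by congr count_below; card_lia T.
have count_n2 : count_below C L n = count_below C L n.-1 + (y1 \in C).
  rewrite -(count_below_step C inj (_ : L y1 = n.-1 :> nat)) ?L_y1 //.
  by congr count_below; card_lia T.
have [y2C y1C] : y2 \in C /\ y1 \in C.
  by move: count_n1 count_n2 count_lt; rewrite count_n; case: (y2 \in C); case: (y1 \in C); lia.
split; last by move: count_n1 count_n2 count_lt; rewrite count_n y2C y1C; lia.
move=> y top_y; have : L y = n.-2 :> nat \/ L y = n.-1 :> nat.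
  by move: top_y (ltn_ord (L y)); card_lia T.
case=> L_y; [suff -> : y = y2 by [] | suff -> : y = y1 by []];
  by apply: inj; apply: val_inj; rewrite /= ?L_y2 ?L_y1.
Qed.

Lemma tangled_component (L : labeling T) : 2 <= n -> tangled le L ->
  exists2 C, C \in components le & L \in tangled_at C.
Proof.
move=> n_ge2 tangled_L; have /and3P[/injectiveP inj _ _] := tangled_L.
have [x [y [pxy inv]]] := tangled_inversion n_ge2 tangled_L.
pose C := [set z | connect (hasse le) x z].
have C_comp : C \in components le by apply: imset_f.
have closedC := components_plt_closed Hpo C_comp.
have xC : x \in C by rewrite inE connect0.
have yC : y \in C by rewrite inE connect_plt.
have not_sorted : ~~ is_linext (restr le C) (std C (iter n.-2 (promote le) L)).
  exact: std_not_linext xC yC (promote_iter_inj Hpo inj) pxy inv.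
have n2_le : n.-2 <= n by card_lia T.
have count_lt := count_below_not_linext closedC inj n2_le not_sorted.
have [top_in count_eq] := top_labels_in inj n_ge2 count_lt.
exists C => //; rewrite inE tangled_L /=; apply/andP; split.
  by apply/forallP => z; apply/implyP; apply: top_in.
have std_inj := std_inj (C := C) inj.
apply/and3P; split; first exact/injectiveP.
  exact (linext_iter_sort (restr_poset C Hpo) std_inj).
apply/forallP => k; apply: contra not_sorted => sorted_k.
rewrite std_iter // count_eq; apply: (linext_iter_mono (restr_poset C Hpo) std_inj _ sorted_k).
have card_S : #|{: {x : T | x \in C}}| = #|C| by rewrite card_sig.
by move: (k : nat) (ltn_ord k) => i; rewrite card_S; lia.
Qed.

End TangledComponent.

Lemma labeling_eq_std (T : finType) (C : {set T}) (L1 L2 : labeling T) :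
  injective L1 -> injective L2 -> std C L1 = std C L2 ->
  (forall y, y \notin C -> L1 y = L2 y) -> L1 = L2.
Proof.
move=> inj1 inj2 std_eq out_eq.
have lt_eq a b : a \in C -> b \in C -> (L1 a < L1 b) = (L2 a < L2 b).
  by move=> aC bC; rewrite -(std_lt (exist _ a aC) (exist _ b bC) inj1) std_eq std_lt.
suff L_eq l a : L1 a = l :> nat -> L2 a = l :> nat by apply/ffunP => a; apply/val_inj/esym/L_eq.
elim/ltn_ind: l a => l IH a L1_a.
case: (boolP (a \in C)) => aC; last by rewrite -out_eq.
case: (ltngtP (L2 a) l) => // [lt_a | gt_a].
  have [a2 L1_a2] := labeling_onto inj1 (L2 a).
  have L2_a2 : L2 a2 = L2 a :> nat by apply: (IH _ lt_a); rewrite L1_a2.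
  have a2_a : a2 = a by apply/inj2/val_inj.
  by move: lt_a; rewrite -L1_a -L1_a2 a2_a ltnn.
have l_lt : l < #|T| by rewrite -L1_a ltn_ord.
have [b L2_b] := labeling_onto inj2 (Ordinal l_lt).
have b_a : b != a by apply: contraTneq gt_a => eq_ba; rewrite -eq_ba L2_b ltnn.
have L1_ab : L1 a != L1 b by rewrite (inj_eq inj1) eq_sym.
have bC : b \in C.
  by apply: contraTT L1_ab => /out_eq ->; rewrite negbK; apply/eqP/val_inj; rewrite /= L2_b L1_a.
have : L1 a < L1 b.
  rewrite ltn_neqAle L1_ab L1_a leqNgt /=; apply/negP => b_lt.
  by have := IH _ b_lt b erefl; rewrite L2_b /= => l_eq; move: b_lt; rewrite -l_eq ltnn.
by rewrite lt_eq // L2_b /= ltnNge ltnW.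
Qed.

(* A labeling in [tangled_at C] is determined by its standardization on [C],
   which is tangled, and by its injective restriction to the complement of [C],
   which avoids the two top labels. *)
Lemma card_tangled_at (T : finType) (le : rel T) (C : {set T}) :
  #|tangled_at le C| <= ntangled (restr le C) * #|T|.-2 ^_ (#|T| - #|C|).
Proof.
pose D := {x : T | x \notin C}.
pose split_lab (L : labeling T) := (std C L, [ffun d : D => L (val d)]).
have split_inj : {in tangled_at le C &, injective split_lab}.
  move=> L1 L2; rewrite !inE => /and3P[/and3P[/injectiveP inj1 _ _] _ _].
  move=> /and3P[/and3P[/injectiveP inj2 _ _] _ _] [std_eq out_eq].
  apply: labeling_eq_std inj1 inj2 std_eq _ => y yC.
  by have := congr1 (fun f : {ffun D -> _} => f (exist _ y yC)) out_eq; rewrite !ffunE.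
rewrite -(card_in_imset split_inj).
pose low := [set i : 'I_#|T| | i < #|T|.-2].
have sub : split_lab @: tangled_at le C \subset
    setX [set s | tangled (restr le C) s] [set f : {ffun D -> _} in ffun_on low | injectiveb f].
  apply/subsetP => p /imsetP[L]; rewrite inE => /and3P[/and3P[/injectiveP inj _ _] top_in tg] ->.
  rewrite !inE tg /=; apply/andP; split.
    apply/ffun_onP => d; rewrite ffunE inE ltnNge; apply: contra (valP d) => top_d.
    exact: implyP (forallP top_in (val d)) top_d.
  by apply/injectiveP => d1 d2; rewrite !ffunE => /inj/val_inj.
apply: leq_trans (subset_leq_card sub) _.
rewrite cardsX card_inj_ffuns_on card_ord_lt; last by rewrite -subn2 leq_subr.
have -> : #|{: D}| = #|~: C| by rewrite card_sig; apply: eq_card => x; rewrite !inE.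
by rewrite [#|T| - _](_ : _ = #|~: C|) // -(cardsC C) addKn.
Qed.

Lemma fact_mul_ffact c m : 2 <= m -> 0 < c -> c <= m ->
  c.-1`! * m.-2 ^_ (m - c) = c.-1 * m.-2`!.
Proof.
move=> m_ge2; case: c => [|[|c]] // _ le_cm.
  by rewrite ffact_small ?muln0 //; lia.
have le_mc : m - c.+2 <= m.-2 by lia.
rewrite -(ffact_fact le_mc) (_ : m.-2 - (m - c.+2) = c); last by lia.
by rewrite /= factS -mulnA [c`! * _]mulnC.
Qed.

Lemma card_bigcup_le (I U : finType) (P : pred I) (F : I -> {set U}) :
  #|\bigcup_(i | P i) F i| <= \sum_(i | P i) #|F i|.
Proof.
elim/big_rec2: _ => [|i k A _ le_Ak]; first by rewrite cards0.
by rewrite (leq_trans (leq_card_setU _ _).1) ?leq_add2l.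
Qed.

Theorem mainTheorem11 (T : finType) (le : rel T) (Hpo : is_poset le)
  (Hn : 2 <= #|T|) :
  (forall C : {set T}, C \in components le ->
     ntangled (restr le C) <= (#|C|.-1)`!) ->
  ntangled le <= (#|T| - #|components le|) * (#|T| - 2)`!.
Proof.
move=> tangled_comp_le.
have cover : [set L | tangled le L] \subset \bigcup_(C in components le) tangled_at le C.
  apply/subsetP => L; rewrite inE => /(tangled_component Hpo Hn)[C C_comp L_C].
  by apply/bigcupP; exists C.
have card_C C : C \in components le -> #|tangled_at le C| <= #|C|.-1 * #|T|.-2`!.
  move=> C_comp; rewrite -(fact_mul_ffact Hn (components_card_gt0 C_comp) (max_card _)).
  by apply: leq_trans (card_tangled_at le C) _; rewrite leq_mul2r tangled_comp_le ?orbT.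
have sum_C : \sum_(C in components le) #|C|.-1 = #|T| - #|components le|.
  rewrite -(components_card_sum le) -sum1_card -sumnB => [|A /components_card_gt0 //].
  by apply: eq_bigr => A _; rewrite subn1.
apply: leq_trans (subset_leq_card cover) _.
apply: leq_trans (card_bigcup_le _ _) _.
by rewrite subn2 -sum_C big_distrl leq_sum.
Qed.
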